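(* Let $\vec{G}$ be a DDMOG of order $n$, let $g$ be a DDM labeling of $\vec{G}$, and let $u\in V(\vec{G})$ satisfy $g(u)=n$. Let $\vec{H}$ be a DDMOG of order $m$, let $h$ be a DDM labeling of $\vec{H}$, and let $w\in V(\vec{H})$ satisfy $h(w)=1$. If $\vec{H}$ is balanced, then the vertex coalescence $\vec{K}=\vec{G}\cdot_{uw}\vec{H}$ is a DDMOG on $n+m-1$ vertices.
   Context: An oriented graph is a finite digraph without loops such that whenever $(u,v)$ is an arc, $(v,u)$ is not. For a vertex $v$, $N^+(v)=\{x:(x,v)\text{ is an arc}\}$, $N^-(v)=\{x:(v,x)\text{ is an arc}\}$, $imb(v)=|N^+(v)|-|N^-(v)|$; the oriented graph is balanced if $imb(v)=0$ for all $v$. For a labeling $f$, $wt_f(v)=\sum_{x\in N^+(v)}f(x)-\sum_{x\in N^-(v)}f(x)$. A DDM labeling of an oriented graph on $n$ vertices is a bijection $f:V\to\{1,\dots,n\}$ with $wt_f(v)=0$ for all $v$; a DDMOG is an oriented graph admitting a DDM labeling. For a vertex $u$ of $\vec{G_1}$ and a vertex $v$ of $\vec{G_2}$ (vertex-disjoint oriented graphs), the vertex coalescence $\vec{G_1}\cdot_{uv}\vec{G_2}$ is obtained from the disjoint union $\vec{G_1}\cup\vec{G_2}$ by adding the arc $(u,x)$ for every arc $(v,x)$ of $\vec{G_2}$, adding the arc $(x,u)$ for every arc $(x,v)$ of $\vec{G_2}$, and then deleting $v$. *)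

From mathcomp Require Import all_boot all_order all_algebra.
Set Implicit Arguments. Unset Strict Implicit. Unset Printing Implicit Defensive.
Import GRing.Theory Num.Theory.

(* An oriented graph on the finite vertex type V is given by its arc relation
   [a]: [a x y] means (x,y) is an arc. *)
Definition oriented (V : finType) (a : rel V) : Prop :=
  (forall x, ~~ a x x) /\ (forall x y, a x y -> ~~ a y x).

Definition imb (V : finType) (a : rel V) (v : V) : int :=
  (#|[set x | a x v]|%:Z - #|[set x | a v x]|%:Z)%R.

Definition balanced (V : finType) (a : rel V) : Prop :=
  forall v, imb a v = 0%R.

Definition wt (V : finType) (a : rel V) (f : V -> nat) (v : V) : int :=
  (\sum_(x | a x v) (f x)%:Z - \sum_(x | a v x) (f x)%:Z)%R.

Definition DDM_labeling (V : finType) (a : rel V) (f : V -> nat) : Prop :=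
  [/\ injective f, (forall v, 1 <= f v <= #|V|)%N & forall v, wt a f v = 0%R].

Definition DDMOG (V : finType) (a : rel V) : Prop :=
  oriented a /\ exists f : V -> nat, DDM_labeling a f.

Definition coal_vertex (V1 V2 : finType) (v : V2) : finType :=
  (V1 + {x : V2 | x != v})%type.

Definition coal_arc (V1 V2 : finType) (a1 : rel V1) (a2 : rel V2)
  (u : V1) (v : V2) : rel (@coal_vertex V1 V2 v) :=
  fun p q =>
    match p, q with
    | inl x, inl y => a1 x y
    | inr x, inr y => a2 (val x) (val y)
    | inl x, inr y => (x == u) && a2 v (val y)
    | inr x, inl y => (y == u) && a2 (val x) v
    end.
Arguments coal_vertex V1 [V2] v.
Arguments coal_arc [V1 V2] a1 a2 u v _ _.

(* Keep g on G and label each vertex y <> w of H by h y + (n - 1); the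
   missing vertex w would get h w + n - 1 = n = g u, the label of the vertex
   it is merged into.  Shifting a labeling by c changes every weight by c
   times the imbalance, so on the balanced H all weights stay 0, and the
   merged vertex has weight wt_g(u) + wt_h(w) = 0.  Since h y >= 2 for
   y <> w, the shifted labels fill [n + 1, n + m - 1], disjoint from g. *)

From mathcomp Require Import all_boot all_order all_algebra.
From mathcomp Require Import zify.
Import GRing.Theory Num.Theory.

Set Implicit Arguments.
Unset Strict Implicit.
Unset Printing Implicit Defensive.

Lemma bigD1_sig (R : nmodType) (T : finType) (v : T) (P : pred T) (F : T -> R) :
  (\sum_(x | P x) F x =
   (if P v then F v else 0) + \sum_(z : {x | x != v} | P (val z)) F (val z))%R.
Proof.
rewrite -(big_sub_cond (predC1 v)).
case: ifP => Pv.
  by rewrite (bigD1 v) //; congr (_ + _)%R; apply: eq_bigl => x; rewrite andbC.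
rewrite add0r; apply: eq_bigl => x.
by case: (eqVneq x v) => [->|xv]; rewrite !inE ?Pv ?xv ?andbF.
Qed.

Lemma big_pred1_andb (R : nmodType) (T : finType) (u : T) (b : bool) (F : T -> R) :
  (\sum_(x | (x == u) && b) F x = if b then F u else 0)%R.
Proof.
case: b; last by rewrite big_pred0 // => x; rewrite andbF.
by apply: big_pred1 => x; rewrite andbT.
Qed.

Lemma wt_addn (V : finType) (a : rel V) (f : V -> nat) (c : nat) (v : V) :
  wt a (fun x => f x + c)%N v = (wt a f v + c%:Z * imb a v)%R.
Proof.
have sum_addn (P : pred V) :
    (\sum_(x | P x) (f x + c)%N%:Z =
     \sum_(x | P x) (f x)%:Z + c%:Z * #|[set x | P x]|%:Z)%R.
  rewrite (eq_bigr (fun x => (f x)%:Z + c%:Z)%R) => [|x _]; last by rewrite PoszD.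
  by rewrite big_split /= cardsE sumr_const -mulr_natr natz mulrC.
by rewrite /wt /imb !sum_addn mulrBr opprD addrACA.
Qed.

Lemma wt_addn_balanced (V : finType) (a : rel V) (f : V -> nat) (c : nat) :
  balanced a -> forall v, wt a (fun x => f x + c)%N v = wt a f v.
Proof. by move=> bal v; rewrite wt_addn bal mulr0 addr0. Qed.

Section Coalescence.

Variables (V1 V2 : finType) (a1 : rel V1) (a2 : rel V2) (u : V1) (v : V2).

Local Notation K := (coal_vertex V1 v).
Local Notation aK := (coal_arc a1 a2 u v).

Lemma card_coal_vertex : #|{: K}| = (#|V1| + #|V2| - 1)%N.
Proof.
rewrite card_sum card_sig (eq_card (B := predC1 v)) // cardC1.
have : (0 < #|V2|)%N by apply/card_gt0P; exists v.
lia.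
Qed.

Lemma coal_oriented : oriented a1 -> oriented a2 -> oriented aK.
Proof.
move=> [irr1 asym1] [irr2 asym2]; split.
  by case=> [x|y] /=; rewrite ?irr1 ?irr2 ?andbF.
case=> [x|y] [x'|y'] /=.
- exact: asym1.
- by case/andP=> -> /asym2/negbTE ->.
- by case/andP=> -> /asym2/negbTE ->.
- exact: asym2.
Qed.

Variables (f1 : V1 -> nat) (f2 : V2 -> nat).

Definition coal_label (p : K) : nat :=
  match p with inl x => f1 x | inr y => f2 (val y) end.

Lemma coal_label_inj :
  injective f1 -> injective f2 -> (forall x y, y != v -> f1 x < f2 y)%N ->
  injective coal_label.
Proof.
move=> inj1 inj2 lt12.
case=> [x|[y yv]] [x'|[y' y'v]] /=.
- by move/inj1 ->.
- by move=> e; have := lt12 x _ y'v; rewrite e ltnn.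
- by move=> e; have := lt12 x' _ yv; rewrite e ltnn.
- by move/inj2 => e; congr inr; apply: val_inj.
Qed.

Lemma wt_coal_inl x : ~~ a2 v v ->
  wt aK coal_label (inl x) = (wt a1 f1 x + (if x == u then wt a2 f2 v else 0))%R.
Proof.
move=> irr_v; rewrite /wt !big_sumType /=.
case: eqVneq => [->|_] /=.
  rewrite [in RHS](bigD1_sig v (a2^~ v)) [in RHS](bigD1_sig v (a2 v)).
  by rewrite (negbTE irr_v) !add0r opprD addrACA.
by rewrite !big_pred0_eq !addr0.
Qed.

Lemma wt_coal_inr y : f2 v = f1 u -> wt aK coal_label (inr y) = wt a2 f2 (val y).
Proof.
move=> f2v; rewrite /wt !big_sumType /= !big_pred1_andb.
by rewrite (bigD1_sig v (a2^~ (val y))) (bigD1_sig v (a2 (val y))) f2v.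
Qed.

End Coalescence.

Theorem theorem2 (V1 V2 : finType) (a1 : rel V1) (a2 : rel V2)
  (g : V1 -> nat) (h : V2 -> nat) (u : V1) (w : V2) :
  oriented a1 -> DDM_labeling a1 g -> g u = #|V1| ->
  oriented a2 -> DDM_labeling a2 h -> h w = 1 ->
  balanced a2 ->
  DDMOG (coal_arc a1 a2 u w) /\ #|{: coal_vertex V1 w}| = (#|V1| + #|V2| - 1)%N.
Proof.
move=> or1 [ginj grng gwt] gu or2 [hinj hrng hwt] hw bal.
set n := #|V1| in grng gu *; set m := #|V2| in hrng *.
pose h' y := (h y + n.-1)%N.
have h'w : h' w = g u by rewrite /h' hw gu add1n prednK // -gu; case/andP: (grng u).
have lt_g_h' x y : y != w -> (g x < h' y)%N.
  move=> yw; have : h y != h w by apply: contra yw => /eqP/hinj ->.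
  by move: (grng x) (hrng y); rewrite /h' hw; lia.
split; last exact: card_coal_vertex.
split; first exact: coal_oriented.
exists (coal_label g h'); split.
- by apply: coal_label_inj lt_g_h' => // y y' /addIn/hinj.
(* [-/n] also folds the syntactically different [#|V1|] produced by
   [card_coal_vertex], which [lia] would otherwise see as a new atom. *)
- rewrite card_coal_vertex -/n -/m => -[x|[y _]] /=; move: (grng u) (hrng w).
  + by move: (grng x); lia.
  + by move: (hrng y); rewrite /h'; lia.
- case=> [x|y]; last by rewrite wt_coal_inr // wt_addn_balanced.
  rewrite wt_coal_inl; last by case: or2.
  by rewrite gwt wt_addn_balanced // hwt; case: eqP.
Qed.
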